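(* Let $\mathbb{R}^{3,1}$ denote $\mathbb{R}^4$ with the inner product $\langle\langle X,Y\rangle\rangle = X_1Y_1+X_2Y_2+X_3Y_3-X_4Y_4$. Let $S\colon\mathbb{R}^2\to\mathbb{R}^{3,1}$ be a regular smooth net with an attached tangent isotropic hyperplane congruence $P$, and let $N(u,v)$ be a normal vector to $P(u,v)$ depending smoothly on $(u,v)$. Let $C\colon[0,1]\to S(\mathbb{R}^2)$, $C(t)=S(u(t),v(t))$, be a regular smooth curve such that the family of hyperplanes $t\mapsto P(u(t),v(t))$ (written as $\langle\langle X-C(t),N(u(t),v(t))\rangle\rangle=0$) is regular, and hence has an envelope. Then at each point $C(t)$, any tangent line to the surface $S(\mathbb{R}^2)$ that is contained in the characteristic plane $\Pi(t)$ of this envelope is L-conjugate to the tangent line of $C$ at $C(t)$ with respect to $P$.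
   Context: An isotropic hyperplane in $\mathbb{R}^{3,1}$ is a hyperplane $\{(x,x_4): x_4=\langle n,x\rangle+h\}$ with $n\in\mathbb{R}^3$ a Euclidean unit vector, $h\in\mathbb{R}$. A regular smooth net is a smooth map $S\colon\mathbb{R}^2\to\mathbb{R}^{3,1}$ with $S_u\not\parallel S_v$ everywhere; an attached tangent isotropic hyperplane congruence is a smooth map $(u,v)\mapsto P(u,v)$ to isotropic hyperplanes with $S(u,v)\in P(u,v)$ and $S_u,S_v$ parallel to $P(u,v)$. For a family of hyperplanes $P(t):\langle\langle X-S(t),N(t)\rangle\rangle=0$, $t\in[0,1]$, with $S,N$ smooth, the family is regular if $\dot N(t)\not\parallel N(t)$ for all $t$; then $\dot P(t)$ denotes the hyperplane $\langle\langle X-S(t),\dot N(t)\rangle\rangle-\langle\langle \dot S(t),N(t)\rangle\rangle=0$, the characteristic plane is $\Pi(t)=P(t)\cap\dot P(t)$, and the union of the $\Pi(t)$ is the envelope. L-conjugacy: define $L_P=\langle\langle S_{uu},N\rangle\rangle$, $M_P=\langle\langle S_{uv},N\rangle\rangle$, $N_P=\langle\langle S_{vv},N\rangle\rangle$ and $\mathrm{II}_{S,P}(A,B)=L_Pa_1b_1+M_P(a_1b_2+a_2b_1)+N_Pa_2b_2$ for $A=a_1S_u+a_2S_v$, $B=b_1S_u+b_2S_v$. Two non-parallel tangent vectors $T_1,T_2$ at $S(u,v)$ are L-conjugate with respect to $P$ if there is a diffeomorphism $D$ of $\mathbb{R}^2$ such that for $\bar S=S\circ D$, $\bar P=P\circ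 D$, at the corresponding parameter $\bar S_u\parallel T_1$, $\bar S_v\parallel T_2$ and $\bar S_u,\bar S_v,\bar S_{uv}$ are parallel to $\bar P$ (equivalently, $\mathrm{II}_{S,P}(T_1,T_2)=0$); a tangent vector $A$ is called L-conjugate to itself with respect to $P$ if $\mathrm{II}_{S,P}(A,A)=0$. Tangent lines are L-conjugate if their direction vectors are. *)

From Stdlib Require Import Reals.
From Coquelicot Require Import Coquelicot.
Open Scope R_scope.

Record V4 := mk4 { c1 : R; c2 : R; c3 : R; c4 : R }.

Definition mink (X Y : V4) : R :=
  c1 X * c1 Y + c2 X * c2 Y + c3 X * c3 Y - c4 X * c4 Y.

Definition vadd (X Y : V4) : V4 :=
  mk4 (c1 X + c1 Y) (c2 X + c2 Y) (c3 X + c3 Y) (c4 X + c4 Y).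
Definition vscal (a : R) (X : V4) : V4 :=
  mk4 (a * c1 X) (a * c2 X) (a * c3 X) (a * c4 X).
Definition vsub (X Y : V4) : V4 := vadd X (vscal (-1) Y).
Definition vzero : V4 := mk4 0 0 0 0.

Definition not_parallel (X Y : V4) : Prop :=
  forall a b : R, vadd (vscal a X) (vscal b Y) = vzero -> a = 0 /\ b = 0.

Definition du (f : R -> R -> R) : R -> R -> R :=
  fun u v => Derive (fun x => f x v) u.
Definition dv (f : R -> R -> R) : R -> R -> R :=
  fun u v => Derive (fun y => f u y) v.

Fixpoint Ck (k : nat) (f : R -> R -> R) : Prop :=
  match k with
  | O => forall u v : R, continuous (fun p : R * R => f (fst p) (snd p)) (u, v)
  | S m =>
      (forall u v : R, continuous (fun p : R * R => f (fst p) (snd p)) (u, v)) /\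
      (forall u v : R, ex_derive (fun x => f x v) u /\ ex_derive (fun y => f u y) v) /\
      Ck m (du f) /\ Ck m (dv f)
  end.

Definition smooth2 (f : R -> R -> R) : Prop := forall k, Ck k f.

Definition smooth1 (f : R -> R) : Prop := forall (k : nat) (x : R), ex_derive_n f k x.

Definition smooth_net (S : R -> R -> V4) : Prop :=
  smooth2 (fun u v => c1 (S u v)) /\ smooth2 (fun u v => c2 (S u v)) /\
  smooth2 (fun u v => c3 (S u v)) /\ smooth2 (fun u v => c4 (S u v)).

Definition Du (S : R -> R -> V4) : R -> R -> V4 := fun u v =>
  mk4 (du (fun a b => c1 (S a b)) u v) (du (fun a b => c2 (S a b)) u v)
      (du (fun a b => c3 (S a b)) u v) (du (fun a b => c4 (S a b)) u v).
Definition Dv (S : R -> R -> V4) : R -> R -> V4 := fun u v =>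
  mk4 (dv (fun a b => c1 (S a b)) u v) (dv (fun a b => c2 (S a b)) u v)
      (dv (fun a b => c3 (S a b)) u v) (dv (fun a b => c4 (S a b)) u v).
Definition Dt (C : R -> V4) (t : R) : V4 :=
  mk4 (Derive (fun s => c1 (C s)) t) (Derive (fun s => c2 (C s)) t)
      (Derive (fun s => c3 (C s)) t) (Derive (fun s => c4 (C s)) t).

Definition regular_net (S : R -> R -> V4) : Prop :=
  smooth_net S /\ forall u v, not_parallel (Du S u v) (Dv S u v).

(* the isotropic hyperplane {(x,x4) : x4 = <n,x> + h}, n a Euclidean unit
   vector of R^3, encoded by (n1,n2,n3,h) *)
Record IsoHyp := mkIH { n1 : R; n2 : R; n3 : R; hh : R }.

Definition is_iso_hyp (P : IsoHyp) : Prop :=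
  n1 P ^ 2 + n2 P ^ 2 + n3 P ^ 2 = 1.

Definition in_hyp (P : IsoHyp) (X : V4) : Prop :=
  c4 X = n1 P * c1 X + n2 P * c2 X + n3 P * c3 X + hh P.

Definition parallel_to_hyp (P : IsoHyp) (X : V4) : Prop :=
  c4 X = n1 P * c1 X + n2 P * c2 X + n3 P * c3 X.

Definition normal_of (P : IsoHyp) (N : V4) : Prop :=
  N <> vzero /\ forall X Y, in_hyp P X -> in_hyp P Y -> mink (vsub X Y) N = 0.

Definition tangent_iso_congruence (S : R -> R -> V4) (P : R -> R -> IsoHyp) : Prop :=
  smooth2 (fun u v => n1 (P u v)) /\ smooth2 (fun u v => n2 (P u v)) /\
  smooth2 (fun u v => n3 (P u v)) /\ smooth2 (fun u v => hh (P u v)) /\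
  (forall u v, is_iso_hyp (P u v)) /\
  (forall u v, in_hyp (P u v) (S u v)) /\
  (forall u v, parallel_to_hyp (P u v) (Du S u v)) /\
  (forall u v, parallel_to_hyp (P u v) (Dv S u v)).

(* II_{S,P}(A,B) for A = a1 Su + a2 Sv, B = b1 Su + b2 Sv, at (u,v) *)
Definition IIform (S : R -> R -> V4) (N : R -> R -> V4) (u v a1 a2 b1 b2 : R) : R :=
  let LP := mink (Du (Du S) u v) (N u v) in
  let MP := mink (Dv (Du S) u v) (N u v) in
  let NP := mink (Dv (Dv S) u v) (N u v) in
  LP * a1 * b1 + MP * (a1 * b2 + a2 * b1) + NP * a2 * b2.

Definition L_conjugate (S : R -> R -> V4) (N : R -> R -> V4) (u v a1 a2 b1 b2 : R) : Prop :=
  IIform S N u v a1 a2 b1 b2 = 0.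

Definition tvec (S : R -> R -> V4) (u v a1 a2 : R) : V4 :=
  vadd (vscal a1 (Du S u v)) (vscal a2 (Dv S u v)).

Definition in_Pt (C Nt : R -> V4) (t : R) (X : V4) : Prop :=
  mink (vsub X (C t)) (Nt t) = 0.
Definition in_Pdot (C Nt : R -> V4) (t : R) (X : V4) : Prop :=
  mink (vsub X (C t)) (Dt Nt t) - mink (Dt C t) (Nt t) = 0.
Definition in_Pi (C Nt : R -> V4) (t : R) (X : V4) : Prop :=
  in_Pt C Nt t X /\ in_Pdot C Nt t X.

Definition regular_family (Nt : R -> V4) : Prop :=
  forall t, 0 <= t <= 1 -> not_parallel (Dt Nt t) (Nt t).

(** Differentiating the tangency relations [<<S_u, N>> = <<S_v, N>> = 0]
    identifies the coefficients of the second fundamental form with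
    [-<<S_u, N_u>>], [-<<S_u, N_v>>] = [-<<S_v, N_u>>] and [-<<S_v, N_v>>], so
    that [II(A, C') = -<<A, dN/dt>>] for every tangent vector [A] (the
    Weingarten relation). A line through [C(t)] with direction [A] lies in
    the hyperplane [Pdot(t)] only if [<<A, dN/dt>> = 0], since
    [<<X - C(t), dN/dt>>] must be constant along it; hence
    [II(A, C') = 0]. *)

From Pilot Require Import Defs.
From Stdlib Require Import Reals Lra.
From Coquelicot Require Import Coquelicot.
Open Scope R_scope.

Section Smooth2.

Variable f : R -> R -> R.
Hypothesis f_smooth : smooth2 f.

Lemma smooth2_continuous x y :
  continuous (fun p : R * R => f (fst p) (snd p)) (x, y).
Proof. exact (f_smooth 0%nat x y). Qed.

Lemma smooth2_ex_derive x y :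
  ex_derive (fun a => f a y) x /\ ex_derive (fun b => f x b) y.
Proof. exact (proj1 (proj2 (f_smooth 1%nat)) x y). Qed.

Lemma smooth2_du : smooth2 (du f).
Proof. intro k; exact (proj1 (proj2 (proj2 (f_smooth (S k))))). Qed.

Lemma smooth2_dv : smooth2 (dv f).
Proof. intro k; exact (proj2 (proj2 (proj2 (f_smooth (S k))))). Qed.

End Smooth2.

Lemma smooth2_differentiable f x y : smooth2 f ->
  differentiable_pt_lim f x y (du f x y) (dv f x y).
Proof.
intro Hf; apply filterdiff_differentiable_pt_lim.
apply (is_derive_filterdiff f x y (du f)).
- apply filter_forall; intros [a b].
  exact (Derive_correct _ _ (proj1 (smooth2_ex_derive f Hf a b))).
- exact (Derive_correct _ _ (proj2 (smooth2_ex_derive f Hf x y))).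
- exact (smooth2_continuous _ (smooth2_du f Hf) x y).
Qed.

Lemma smooth2_Derive_comp f (u v : R -> R) t :
  smooth2 f -> ex_derive u t -> ex_derive v t ->
  Derive (fun s => f (u s) (v s)) t
  = du f (u t) (v t) * Derive u t + dv f (u t) (v t) * Derive v t.
Proof.
intros Hf Hu Hv; apply is_derive_unique, is_derive_Reals.
apply derivable_pt_lim_comp_2d; [exact (smooth2_differentiable f _ _ Hf) | |];
  now apply is_derive_Reals, Derive_correct.
Qed.

Lemma smooth2_du_dv f x y : smooth2 f -> du (dv f) x y = dv (du f) x y.
Proof.
intro Hf.
assert (continuous_2d : forall g, smooth2 g -> continuity_2d_pt g x y).
{ intros g Hg; apply continuity_2d_pt_filterlim, smooth2_continuous, Hg. }
refine (Schwarz f x y _ _ _).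
- exists (mkposreal 1 Rlt_0_1); intros a b _ _.
  split; [|split; [|split]].
  + exact (proj1 (smooth2_ex_derive f Hf a b)).
  + exact (proj2 (smooth2_ex_derive f Hf a b)).
  + exact (proj1 (smooth2_ex_derive _ (smooth2_dv f Hf) a b)).
  + exact (proj2 (smooth2_ex_derive _ (smooth2_du f Hf) a b)).
- apply (continuous_2d _ (smooth2_du _ (smooth2_dv f Hf))).
- apply (continuous_2d _ (smooth2_dv _ (smooth2_du f Hf))).
Qed.

Definition ex_derive4 (F : R -> V4) (x : R) : Prop :=
  ex_derive (fun a => Defs.c1 (F a)) x /\ ex_derive (fun a => Defs.c2 (F a)) x /\
  ex_derive (fun a => Defs.c3 (F a)) x /\ ex_derive (fun a => Defs.c4 (F a)) x.

Lemma is_derive_mink (F G : R -> V4) x :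
  ex_derive4 F x -> ex_derive4 G x ->
  is_derive (fun a => mink (F a) (G a)) x
    (mink (Dt F x) (G x) + mink (F x) (Dt G x)).
Proof.
intros (F1 & F2 & F3 & F4) (G1 & G2 & G3 & G4).
unfold mink, Dt; simpl.
apply Derive_correct in F1, F2, F3, F4, G1, G2, G3, G4.
(* The sum and product rules produce the derivative in their own shape [l']. *)
match goal with |- is_derive _ _ ?l => evar (l' : R); replace l with l' end.
- apply @is_derive_minus; [apply @is_derive_plus; [apply @is_derive_plus|]|];
    (apply @is_derive_mult; [eassumption | eassumption | intros; apply Rmult_comm]).
- unfold l', minus, plus, opp, mult; simpl; ring.
Qed.

Lemma mink_orthogonal_derive (F G : R -> V4) x :
  ex_derive4 F x -> ex_derive4 G x -> (forall a, mink (F a) (G a) = 0) ->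
  mink (Dt F x) (G x) = - mink (F x) (Dt G x).
Proof.
intros HF HG Horth.
enough (Hsum : mink (Dt F x) (G x) + mink (F x) (Dt G x) = 0) by lra.
rewrite <- (is_derive_unique _ _ _ (is_derive_mink F G x HF HG)).
transitivity (Derive (fun _ => 0) x); [now apply Derive_ext | apply Derive_const].
Qed.

Section SmoothNet.

Variable A : R -> R -> V4.
Hypothesis A_smooth : smooth_net A.

Lemma smooth_net_Du : smooth_net (Du A).
Proof.
destruct A_smooth as (H1 & H2 & H3 & H4).
exact (conj (smooth2_du _ H1) (conj (smooth2_du _ H2) (conj (smooth2_du _ H3) (smooth2_du _ H4)))).
Qed.

Lemma smooth_net_Dv : smooth_net (Dv A).
Proof.
destruct A_smooth as (H1 & H2 & H3 & H4).
exact (conj (smooth2_dv _ H1) (conj (smooth2_dv _ H2) (conj (smooth2_dv _ H3) (smooth2_dv _ H4)))).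
Qed.

Lemma smooth_net_ex_derive4_u x y : ex_derive4 (fun a => A a y) x.
Proof.
destruct A_smooth as (H1 & H2 & H3 & H4).
exact (conj (proj1 (smooth2_ex_derive _ H1 x y)) (conj (proj1 (smooth2_ex_derive _ H2 x y))
  (conj (proj1 (smooth2_ex_derive _ H3 x y)) (proj1 (smooth2_ex_derive _ H4 x y))))).
Qed.

Lemma smooth_net_ex_derive4_v x y : ex_derive4 (fun b => A x b) y.
Proof.
destruct A_smooth as (H1 & H2 & H3 & H4).
exact (conj (proj2 (smooth2_ex_derive _ H1 x y)) (conj (proj2 (smooth2_ex_derive _ H2 x y))
  (conj (proj2 (smooth2_ex_derive _ H3 x y)) (proj2 (smooth2_ex_derive _ H4 x y))))).
Qed.

Lemma smooth_net_Du_Dv x y : Du (Dv A) x y = Dv (Du A) x y.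
Proof.
destruct A_smooth as (H1 & H2 & H3 & H4).
unfold Du, Dv; simpl.
now rewrite !smooth2_du_dv.
Qed.

Lemma smooth_net_Dt_comp (u v : R -> R) t : ex_derive u t -> ex_derive v t ->
  Dt (fun s => A (u s) (v s)) t = tvec A (u t) (v t) (Derive u t) (Derive v t).
Proof.
destruct A_smooth as (H1 & H2 & H3 & H4); intros Hu Hv.
unfold Dt, tvec, vadd, vscal; simpl.
f_equal; [rewrite (smooth2_Derive_comp _ u v t H1) | rewrite (smooth2_Derive_comp _ u v t H2)
  | rewrite (smooth2_Derive_comp _ u v t H3) | rewrite (smooth2_Derive_comp _ u v t H4)];
  auto; ring.
Qed.

End SmoothNet.

Lemma Du_mink_orthogonal A B x y :
  smooth_net A -> smooth_net B -> (forall a b, mink (A a b) (B a b) = 0) ->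
  mink (Du A x y) (B x y) = - mink (A x y) (Du B x y).
Proof.
intros HA HB Horth.
exact (mink_orthogonal_derive (fun a => A a y) (fun a => B a y) x
  (smooth_net_ex_derive4_u A HA x y) (smooth_net_ex_derive4_u B HB x y) (fun a => Horth a y)).
Qed.

Lemma Dv_mink_orthogonal A B x y :
  smooth_net A -> smooth_net B -> (forall a b, mink (A a b) (B a b) = 0) ->
  mink (Dv A x y) (B x y) = - mink (A x y) (Dv B x y).
Proof.
intros HA HB Horth.
exact (mink_orthogonal_derive (fun b => A x b) (fun b => B x b) y
  (smooth_net_ex_derive4_v A HA x y) (smooth_net_ex_derive4_v B HB x y) (fun b => Horth x b)).
Qed.

Lemma mink_tvec A B x y a1 a2 b1 b2 :
  mink (tvec A x y a1 a2) (tvec B x y b1 b2)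
  = a1 * b1 * mink (Du A x y) (Du B x y) + a1 * b2 * mink (Du A x y) (Dv B x y)
  + a2 * b1 * mink (Dv A x y) (Du B x y) + a2 * b2 * mink (Dv A x y) (Dv B x y).
Proof. unfold tvec, mink, vadd, vscal; simpl; ring. Qed.

Lemma IIform_Weingarten S N x y a1 a2 b1 b2 :
  smooth_net S -> smooth_net N ->
  (forall a b, mink (Du S a b) (N a b) = 0) -> (forall a b, mink (Dv S a b) (N a b) = 0) ->
  IIform S N x y a1 a2 b1 b2 = - mink (tvec S x y a1 a2) (tvec N x y b1 b2).
Proof.
intros HS HN HuN HvN.
pose proof (smooth_net_Du S HS) as HSu; pose proof (smooth_net_Dv S HS) as HSv.
unfold IIform; rewrite mink_tvec.
rewrite (Du_mink_orthogonal _ _ x y HSu HN HuN), (Dv_mink_orthogonal _ _ x y HSv HN HvN).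
pose proof (Dv_mink_orthogonal _ _ x y HSu HN HuN) as HM.
pose proof (Du_mink_orthogonal _ _ x y HSv HN HvN) as HM'.
rewrite (smooth_net_Du_Dv S HS), HM in HM'.
assert (Hsym : mink (Dv S x y) (Du N x y) = mink (Du S x y) (Dv N x y)) by lra.
rewrite HM, Hsym; ring.
Qed.

Lemma normal_of_parallel P N Y X :
  normal_of P N -> in_hyp P Y -> parallel_to_hyp P X -> mink X N = 0.
Proof.
intros [_ HN] HY HX.
replace (mink X N) with (mink (vsub (vadd Y X) Y) N).
- apply HN; [|exact HY].
  unfold in_hyp, parallel_to_hyp in *; simpl; rewrite HY, HX; ring.
- unfold mink, vsub, vadd, vscal; simpl; ring.
Qed.

Lemma in_Pdot_line_orthogonal (C Nt : R -> V4) t T :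
  (forall s, in_Pdot C Nt t (vadd (C t) (vscal s T))) -> mink T (Dt Nt t) = 0.
Proof.
intro Hline; generalize (Hline 0) (Hline 1).
unfold in_Pdot, mink, vsub, vadd, vscal; simpl; lra.
Qed.

Theorem proposition1
  (S : R -> R -> V4) (P : R -> R -> IsoHyp) (N : R -> R -> V4)
  (u v : R -> R) :
  regular_net S ->
  tangent_iso_congruence S P ->
  smooth_net N ->
  (forall a b : R, normal_of (P a b) (N a b)) ->
  smooth1 u -> smooth1 v ->
  (forall t : R, 0 <= t <= 1 -> Dt (fun s => S (u s) (v s)) t <> vzero) ->
  regular_family (fun s => N (u s) (v s)) ->
  forall t : R, 0 <= t <= 1 ->
  forall a1 a2 : R, (a1 <> 0 \/ a2 <> 0) ->
  (forall s : R,
     in_Pi (fun r => S (u r) (v r)) (fun r => N (u r) (v r)) t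
       (vadd (S (u t) (v t)) (vscal s (tvec S (u t) (v t) a1 a2)))) ->
  L_conjugate S N (u t) (v t) a1 a2 (Derive u t) (Derive v t).
Proof.
(* The regularity hypotheses only guarantee that the envelope exists. *)
intros [HS _] (_ & _ & _ & _ & _ & Hin & HSu & HSv) HN Hnormal Hu Hv _ _ t _ a1 a2 _ HPi.
assert (HuN : forall a b, mink (Du S a b) (N a b) = 0)
  by (intros a b; exact (normal_of_parallel _ _ _ _ (Hnormal a b) (Hin a b) (HSu a b))).
assert (HvN : forall a b, mink (Dv S a b) (N a b) = 0)
  by (intros a b; exact (normal_of_parallel _ _ _ _ (Hnormal a b) (Hin a b) (HSv a b))).
assert (Horth : mink (tvec S (u t) (v t) a1 a2) (Dt (fun r => N (u r) (v r)) t) = 0)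
  by (apply in_Pdot_line_orthogonal with (C := fun r => S (u r) (v r)); intro s; apply HPi).
unfold L_conjugate; rewrite IIform_Weingarten by assumption.
rewrite <- (smooth_net_Dt_comp N HN u v t (Hu 1%nat t) (Hv 1%nat t)), Horth.
apply Ropp_0.
Qed.
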